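(* Consider the finite-difference scheme described in the context, with grid parameters $T>0$, $M,N\ge 2$, $\tau=T/M$, $h=1/N$, nonnegative constants $\beta,\gamma,\delta,\mu$, $\varepsilon\in[0,1]$, diffusion constants $\sigma_i>0$, and given grid strategy values $\alpha^i_{k,j}$ with $\alpha^i_{k,0}=\alpha^i_{k,N}=0$, satisfying $h^2\le 4\tau\sigma_i^2$ and $\tau|\alpha^i_{k,j}|\le h/4$ for all $i,k,j$. Then for each $i\in\{S,I,R,C\}$ the solution satisfies $$\max_{0\le k\le M}\|m^{i,h}(t_k,\cdot)\|_{1,h}\le \|m^i_0(\cdot)\|_{1,h}+T\max_{0\le k\le M}\|f^{i,h}(t_k,\cdot)\|_{1,h},$$ where for a grid function $w$ on the points $x_{j+1/2}$, $\|w\|_{1,h}:=\sum_{j=0}^{N-1}|w_{j+1/2}|\,h$, $m^{i,h}(t_k,\cdot)=(m^{i,h}_{k,j+1/2})_{j}$, $m^i_0(\cdot)=(m^i_0(x_{j+1/2}))_j$, and $f^{i,h}(t_k,\cdot)=(f^{i,h}_{k,j+1/2})_j$.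
   Context: Grid: $t_k=k\tau$ ($k=0,\dots,M$), $x_j=jh$ ($j=0,\dots,N$), $x_{j+1/2}=(j+1/2)h$. The four compartments are $i\in\{S,I,R,C\}$. Grid strategy values $\alpha^i_{k,j}$ are given for $k=0,\dots,M$, $j=0,\dots,N$. For $k=1,\dots,M$, $j=0,\dots,N-1$ define $$\gamma^{i,1}_{k,j+1/2}=\tfrac{1}{8\tau}\big(1+\tfrac{4\tau}{h}\alpha^i_{k,j}\big),\quad \gamma^{i,2}_{k,j+1/2}=\tfrac{1}{8\tau}\big(3+\tfrac{4\tau}{h}\alpha^i_{k,j}\big)+\tfrac{1}{8\tau}\big(3-\tfrac{4\tau}{h}\alpha^i_{k,j+1}\big),\quad \gamma^{i,3}_{k,j+1/2}=\tfrac{1}{8\tau}\big(1-\tfrac{4\tau}{h}\alpha^i_{k,j+1}\big).$$ Unknowns are $m^{i,h}_{k,j+1/2}$, $k=0,\dots,M$, $j=0,\dots,N-1$, extended by ghost values (boundary condition) $m^{i,h}_{k,-1/2}:=m^{i,h}_{k,1/2}$, $m^{i,h}_{k,N+1/2}:=m^{i,h}_{k,N-1/2}$. Initial condition: $m^{i,h}_{0,j+1/2}=m^i_0(x_{j+1/2})$ for given functions $m^i_0$ on $[0,1]$. For $k=1,\dots,M$, $j=0,\dots,N-1$, each $i$: $$\Big(\tfrac{1}{8\tau}-\tfrac{\sigma_i^2}{2h^2}\Big)m^{i,h}_{k,j-1/2}+\Big(\tfrac{3}{4\tau}+\tfrac{\sigma_i^2}{h^2}\Big)m^{i,h}_{k,j+1/2}+\Big(\tfrac{1}{8\tau}-\tfrac{\sigma_i^2}{2h^2}\Big)m^{i,h}_{k,j+3/2}$$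 $$= f^{i,h}_{k-1,j+1/2}+\gamma^{i,1}_{k,j+1/2}m^{i,h}_{k-1,j-1/2}+\gamma^{i,2}_{k,j+1/2}m^{i,h}_{k-1,j+1/2}+\gamma^{i,3}_{k,j+1/2}m^{i,h}_{k-1,j+3/2},$$ where for every $k=0,\dots,M$, writing $m^i$ for $m^{i,h}_{k,j+1/2}$: $f^{S,h}_{k,j+1/2}=-\beta m^S m^I+\mu m^C$; $f^{I,h}_{k,j+1/2}=\beta m^S m^I+\varepsilon\beta m^C m^I-\gamma m^I$; $f^{R,h}_{k,j+1/2}=(1-\varepsilon)\beta m^C m^I+\gamma m^I-\delta m^R$; $f^{C,h}_{k,j+1/2}=\delta m^R-\beta m^C m^I-\mu m^C$. *)

From Stdlib Require Import Reals Lra Lia.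
Open Scope R_scope.

Inductive compt : Type := cS | cI | cR | cC.

(* Grid functions: [m i k j] stands for m^{i,h}_{k,j+1/2} (j = 0..N-1);
   [alpha i k j] stands for alpha^i_{k,j} (j = 0..N). *)

Fixpoint sumN (n : nat) (g : nat -> R) : R :=
  match n with O => 0 | S n' => sumN n' g + g n' end.

Fixpoint maxUpTo (M : nat) (g : nat -> R) : R :=
  match M with O => g O | S M' => Rmax (maxUpTo M' g) (g (S M')) end.

Definition norm1h (N : nat) (w : nat -> R) : R :=
  sumN N (fun j => Rabs (w j) * (1 / INR N)).

Definition xmid (N j : nat) : R := (INR j + 1/2) * (1 / INR N).

(* ghost values: m_{k,-1/2} := m_{k,1/2},  m_{k,N+1/2} := m_{k,N-1/2} *)
Definition mLeft (m : nat -> R) (j : nat) : R :=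
  match j with O => m O | S j' => m j' end.
Definition mRight (N : nat) (m : nat -> R) (j : nat) : R :=
  if Nat.eqb (S j) N then m (N - 1)%nat else m (S j).

Definition freact (beta gamma delta mu eps : R) (m : compt -> nat -> nat -> R)
  (i : compt) (k j : nat) : R :=
  let mS := m cS k j in let mI := m cI k j in
  let mR := m cR k j in let mC := m cC k j in
  match i with
  | cS => - beta * mS * mI + mu * mC
  | cI => beta * mS * mI + eps * beta * mC * mI - gamma * mI
  | cR => (1 - eps) * beta * mC * mI + gamma * mI - delta * mR
  | cC => delta * mR - beta * mC * mI - mu * mC
  end.

Definition gam1 (tau h a0 : R) : R := 1 / (8 * tau) * (1 + 4 * tau / h * a0).
Definition gam2 (tau h a0 a1 : R) : R :=
  1 / (8 * tau) * (3 + 4 * tau / h * a0) + 1 / (8 * tau) * (3 - 4 * tau / h * a1).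
Definition gam3 (tau h a1 : R) : R := 1 / (8 * tau) * (1 - 4 * tau / h * a1).

Definition scheme_solution (T : R) (M N : nat) (beta gamma delta mu eps : R)
  (sigma : compt -> R) (alpha : compt -> nat -> nat -> R) (m0 : compt -> R -> R)
  (m : compt -> nat -> nat -> R) : Prop :=
  let tau := T / INR M in
  let h := 1 / INR N in
  (forall i j, (j < N)%nat -> m i O j = m0 i (xmid N j)) /\
  (forall i k j, (1 <= k <= M)%nat -> (j < N)%nat ->
     (1 / (8 * tau) - sigma i ^ 2 / (2 * h ^ 2)) * mLeft (m i k) j
     + (3 / (4 * tau) + sigma i ^ 2 / h ^ 2) * m i k j
     + (1 / (8 * tau) - sigma i ^ 2 / (2 * h ^ 2)) * mRight N (m i k) j
     = freact beta gamma delta mu eps m i (k - 1)%nat j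
       + gam1 tau h (alpha i k j) * mLeft (m i (k - 1)%nat) j
       + gam2 tau h (alpha i k j) (alpha i k (S j)) * m i (k - 1)%nat j
       + gam3 tau h (alpha i k (S j)) * mRight N (m i (k - 1)%nat) j).

(* The implicit operator has nonpositive off-diagonal coefficient a exactly when
   h^2 <= 4 tau sigma^2, and with reflecting ghost cells all its column sums equal
   d + 2a = 1/tau, so the L1 norm of the new time level is at most tau times the
   L1 norm of the right-hand side.  Under the CFL condition tau |alpha| <= h/4 the
   explicit weights gamma^1, gamma^2, gamma^3 are nonnegative, and since alpha
   vanishes at the boundary their column sums also all equal 1/tau (the transport
   part conserves mass).  Hence each time step increases the L1 norm by at most
   tau ||f||, and M steps of size tau = T/M give the bound. *)

From Stdlib Require Import Reals Lra Lia.
Open Scope R_scope.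

Lemma sumN_ext n f g :
  (forall j, (j < n)%nat -> f j = g j) -> sumN n f = sumN n g.
Proof.
  induction n as [|n IH]; intros Hfg; simpl; [reflexivity|].
  rewrite IH by (intros; apply Hfg; lia).
  rewrite (Hfg n) by lia; reflexivity.
Qed.

Lemma sumN_add n f g : sumN n (fun j => f j + g j) = sumN n f + sumN n g.
Proof. induction n as [|n IH]; simpl; [ring | rewrite IH; ring]. Qed.

Lemma sumN_scal_l n c f : sumN n (fun j => c * f j) = c * sumN n f.
Proof. induction n as [|n IH]; simpl; [ring | rewrite IH; ring]. Qed.

Lemma sumN_le n f g :
  (forall j, (j < n)%nat -> f j <= g j) -> sumN n f <= sumN n g.
Proof.
  induction n as [|n IH]; intros Hfg; simpl; [lra|].
  assert (sumN n f <= sumN n g) by (apply IH; intros; apply Hfg; lia).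
  assert (f n <= g n) by (apply Hfg; lia).
  lra.
Qed.

Lemma sumN_ge0 n f : (forall j, (j < n)%nat -> 0 <= f j) -> 0 <= sumN n f.
Proof.
  induction n as [|n IH]; intros Hf; simpl; [lra|].
  assert (0 <= sumN n f) by (apply IH; intros; apply Hf; lia).
  assert (0 <= f n) by (apply Hf; lia).
  lra.
Qed.

Lemma sumN_succ_l n f : sumN (S n) f = f O + sumN n (fun j => f (S j)).
Proof. induction n as [|n IH]; simpl in *; [ring | rewrite IH; ring]. Qed.

Lemma sumN_mLeft n (F : nat -> R -> R) u :
  sumN (S n) (fun j => F j (mLeft u j)) = F O (u O) + sumN n (fun j => F (S j) (u j)).
Proof. apply sumN_succ_l. Qed.

Lemma sumN_mRight n (F : nat -> R -> R) u :
  sumN (S n) (fun j => F j (mRight (S n) u j))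
  = sumN n (fun j => F j (u (S j))) + F n (u n).
Proof.
  simpl sumN at 1; f_equal.
  - apply sumN_ext; intros j Hj; unfold mRight.
    destruct (Nat.eqb_spec (S j) (S n)); [lia | reflexivity].
  - unfold mRight; rewrite Nat.eqb_refl; do 2 f_equal; lia.
Qed.

Lemma Rabs_mLeft u j : Rabs (mLeft u j) = mLeft (fun j => Rabs (u j)) j.
Proof. destruct j; reflexivity. Qed.

Lemma Rabs_mRight N u j : Rabs (mRight N u j) = mRight N (fun j => Rabs (u j)) j.
Proof. unfold mRight; destruct (Nat.eqb (S j) N); reflexivity. Qed.

Lemma sumN_mLeft_mRight n u :
  sumN (S n) (fun j => mLeft u j + mRight (S n) u j) = 2 * sumN (S n) u.
Proof.
  rewrite sumN_add, (sumN_mLeft n (fun _ x => x)), (sumN_mRight n (fun _ x => x)).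
  change (sumN n (fun j => u j)) with (sumN n u).
  assert (sumN (S n) u = sumN n u + u n) by reflexivity.
  pose proof (sumN_succ_l n u).
  lra.
Qed.

Lemma Rabs_triang3 x y z : Rabs (x + y + z) <= Rabs x + Rabs y + Rabs z.
Proof. pose proof (Rabs_triang (x + y) z); pose proof (Rabs_triang x y); lra. Qed.

Lemma implicit_sumN_Rabs_le n a d (u g : nat -> R) :
  a <= 0 ->
  (forall j, (j < S n)%nat -> a * mLeft u j + d * u j + a * mRight (S n) u j = g j) ->
  (d + 2 * a) * sumN (S n) (fun j => Rabs (u j)) <= sumN (S n) (fun j => Rabs (g j)).
Proof.
  intros Ha Hu.
  assert (Hpt : forall j, (j < S n)%nat ->
    d * Rabs (u j) <= Rabs (g j) + - a * (mLeft (fun j => Rabs (u j)) j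
                                        + mRight (S n) (fun j => Rabs (u j)) j)).
  { intros j Hj.
    rewrite <- Rabs_mLeft, <- Rabs_mRight.
    assert (Hdu : d * u j = g j + - a * mLeft u j + - a * mRight (S n) u j)
      by (rewrite <- (Hu j Hj); ring).
    assert (Habs : d * Rabs (u j) <= Rabs (d * u j)).
    { rewrite Rabs_mult; apply Rmult_le_compat_r; [apply Rabs_pos | apply RRle_abs]. }
    rewrite Hdu in Habs.
    pose proof (Rabs_triang3 (g j) (- a * mLeft u j) (- a * mRight (S n) u j)).
    rewrite !Rabs_mult, (Rabs_pos_eq (- a)) in * by lra.
    lra. }
  apply sumN_le in Hpt.
  rewrite sumN_scal_l, sumN_add, sumN_scal_l, sumN_mLeft_mRight in Hpt.
  lra.
Qed.

Lemma sumN_gam_conservative n tau h (A u : nat -> R) :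
  tau <> 0 -> A O = 0 -> A (S n) = 0 ->
  sumN (S n) (fun j => gam1 tau h (A j) * mLeft u j + gam2 tau h (A j) (A (S j)) * u j
                       + gam3 tau h (A (S j)) * mRight (S n) u j)
  = / tau * sumN (S n) u.
Proof.
  intros Htau HA0 HAn.
  assert (Hc : / tau = 8 * (1 / (8 * tau))) by (field; exact Htau).
  rewrite Hc.
  rewrite !sumN_add, (sumN_mLeft n (fun j x => gam1 tau h (A j) * x)),
    (sumN_mRight n (fun j x => gam3 tau h (A (S j)) * x)).
  cbv beta.
  assert (Hshift : sumN n (fun j => gam3 tau h (A (S j)) * u (S j))
                   = sumN n (fun j => gam3 tau h (A j) * u j) + gam3 tau h (A n) * u n
                     - gam3 tau h (A O) * u O).
  { pose proof (sumN_succ_l n (fun j => gam3 tau h (A j) * u j)).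
    simpl sumN in *; cbv beta in *; lra. }
  assert (Hinterior : sumN n (fun j => gam1 tau h (A (S j)) * u j)
                      + sumN n (fun j => gam2 tau h (A j) (A (S j)) * u j)
                      + sumN n (fun j => gam3 tau h (A j) * u j)
                      = 8 * (1 / (8 * tau)) * sumN n u).
  { rewrite <- !sumN_add, <- sumN_scal_l.
    apply sumN_ext; intros; unfold gam1, gam2, gam3; ring. }
  rewrite Hshift; simpl sumN.
  rewrite HA0, HAn in *.
  unfold gam1, gam2, gam3 in *.
  lra.
Qed.

Lemma cfl_ratio_bound tau h x :
  0 < tau -> 0 < h -> tau * Rabs x <= h / 4 -> -1 <= 4 * tau / h * x <= 1.
Proof.
  intros Htau Hh Hx.
  assert (E : 4 * tau / h * x = 4 * (tau * x) / h) by (field; lra).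
  rewrite E; split.
  - apply Rmult_le_reg_r with h; [exact Hh|].
    unfold Rdiv; rewrite Rmult_assoc, Rinv_l by lra.
    pose proof (Rabs_Ropp x); pose proof (Rle_abs (- x)); nra.
  - apply Rmult_le_reg_r with h; [exact Hh|].
    unfold Rdiv; rewrite Rmult_assoc, Rinv_l by lra.
    pose proof (Rle_abs x); nra.
Qed.

Section ExplicitWeights.

Variables (tau h : R).
Hypotheses (Htau : 0 < tau) (Hh : 0 < h).

Let Hc : 0 < 1 / (8 * tau).
Proof. apply Rdiv_lt_0_compat; lra. Qed.

Lemma gam1_ge0 a0 : tau * Rabs a0 <= h / 4 -> 0 <= gam1 tau h a0.
Proof.
  intros Ha0; pose proof (cfl_ratio_bound tau h a0 Htau Hh Ha0).
  unfold gam1; apply Rmult_le_pos; lra.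
Qed.

Lemma gam2_ge0 a0 a1 :
  tau * Rabs a0 <= h / 4 -> tau * Rabs a1 <= h / 4 -> 0 <= gam2 tau h a0 a1.
Proof.
  intros Ha0 Ha1.
  pose proof (cfl_ratio_bound tau h a0 Htau Hh Ha0).
  pose proof (cfl_ratio_bound tau h a1 Htau Hh Ha1).
  unfold gam2; apply Rplus_le_le_0_compat; apply Rmult_le_pos; lra.
Qed.

Lemma gam3_ge0 a1 : tau * Rabs a1 <= h / 4 -> 0 <= gam3 tau h a1.
Proof.
  intros Ha1; pose proof (cfl_ratio_bound tau h a1 Htau Hh Ha1).
  unfold gam3; apply Rmult_le_pos; lra.
Qed.

Lemma explicit_sumN_Rabs_le n (A f u : nat -> R) :
  A O = 0 -> A (S n) = 0 ->
  (forall j, (j <= S n)%nat -> tau * Rabs (A j) <= h / 4) ->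
  sumN (S n) (fun j => Rabs (f j + gam1 tau h (A j) * mLeft u j
                             + gam2 tau h (A j) (A (S j)) * u j
                             + gam3 tau h (A (S j)) * mRight (S n) u j))
  <= sumN (S n) (fun j => Rabs (f j)) + / tau * sumN (S n) (fun j => Rabs (u j)).
Proof.
  intros HA0 HAn HA.
  rewrite <- (sumN_gam_conservative n tau h A (fun j => Rabs (u j))) by (auto; lra).
  rewrite <- sumN_add.
  apply sumN_le; intros j Hj.
  pose proof (gam1_ge0 (A j) (HA j ltac:(lia))).
  pose proof (gam2_ge0 (A j) (A (S j)) (HA j ltac:(lia)) (HA (S j) ltac:(lia))).
  pose proof (gam3_ge0 (A (S j)) (HA (S j) ltac:(lia))).
  rewrite <- Rabs_mLeft, <- Rabs_mRight.
  pose proof (Rabs_triang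
                (f j + gam1 tau h (A j) * mLeft u j + gam2 tau h (A j) (A (S j)) * u j)
                (gam3 tau h (A (S j)) * mRight (S n) u j)).
  pose proof (Rabs_triang3
                (f j) (gam1 tau h (A j) * mLeft u j) (gam2 tau h (A j) (A (S j)) * u j)).
  rewrite !Rabs_mult, (Rabs_pos_eq (gam1 _ _ _)), (Rabs_pos_eq (gam2 _ _ _ _)),
    (Rabs_pos_eq (gam3 _ _ _)) in * by assumption.
  lra.
Qed.

End ExplicitWeights.

Lemma scheme_offdiag_le0 tau h sig :
  0 < tau -> 0 < h -> h ^ 2 <= 4 * tau * sig ^ 2 ->
  1 / (8 * tau) - sig ^ 2 / (2 * h ^ 2) <= 0.
Proof.
  intros Htau Hh Hdiff.
  assert (Hh2 : 0 < h ^ 2) by (apply pow_lt; exact Hh).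
  replace (1 / (8 * tau) - sig ^ 2 / (2 * h ^ 2))
    with ((h ^ 2 - 4 * tau * sig ^ 2) / (8 * tau * h ^ 2)) by (field; lra).
  assert (0 < / (8 * tau * h ^ 2)) by (apply Rinv_0_lt_compat; nra).
  unfold Rdiv; nra.
Qed.

Lemma scheme_row_sum tau h sig :
  0 < tau -> 0 < h ->
  (3 / (4 * tau) + sig ^ 2 / h ^ 2) + 2 * (1 / (8 * tau) - sig ^ 2 / (2 * h ^ 2)) = / tau.
Proof. intros; field; lra. Qed.

Lemma norm1h_eq N w : norm1h N w = 1 / INR N * sumN N (fun j => Rabs (w j)).
Proof. unfold norm1h; rewrite <- sumN_scal_l; apply sumN_ext; intros; ring. Qed.

Lemma norm1h_ge0 N w : 0 <= norm1h N w.
Proof.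
  destruct N as [|n]; [unfold norm1h; simpl; lra|].
  rewrite norm1h_eq; apply Rmult_le_pos.
  - left; apply Rdiv_lt_0_compat; [lra | apply lt_0_INR; lia].
  - apply sumN_ge0; intros; apply Rabs_pos.
Qed.

Lemma scheme_step_norm1h_le n tau h sig (A f uo un : nat -> R) :
  0 < tau -> 0 < h -> h ^ 2 <= 4 * tau * sig ^ 2 ->
  A O = 0 -> A (S n) = 0 ->
  (forall j, (j <= S n)%nat -> tau * Rabs (A j) <= h / 4) ->
  (forall j, (j < S n)%nat ->
     (1 / (8 * tau) - sig ^ 2 / (2 * h ^ 2)) * mLeft un j
     + (3 / (4 * tau) + sig ^ 2 / h ^ 2) * un j
     + (1 / (8 * tau) - sig ^ 2 / (2 * h ^ 2)) * mRight (S n) un j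
     = f j + gam1 tau h (A j) * mLeft uo j + gam2 tau h (A j) (A (S j)) * uo j
       + gam3 tau h (A (S j)) * mRight (S n) uo j) ->
  norm1h (S n) un <= norm1h (S n) uo + tau * norm1h (S n) f.
Proof.
  intros Htau Hh Hdiff HA0 HAn HA Hscheme.
  pose proof (implicit_sumN_Rabs_le n _ _ un _
                (scheme_offdiag_le0 tau h sig Htau Hh Hdiff) Hscheme) as Himplicit.
  rewrite scheme_row_sum in Himplicit by assumption.
  pose proof (explicit_sumN_Rabs_le tau h Htau Hh n A f uo HA0 HAn HA) as Hexplicit.
  assert (Hsum : sumN (S n) (fun j => Rabs (un j))
                 <= sumN (S n) (fun j => Rabs (uo j))
                    + tau * sumN (S n) (fun j => Rabs (f j))).
  { apply Rmult_le_reg_l with (/ tau); [apply Rinv_0_lt_compat; exact Htau|].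
    rewrite Rmult_plus_distr_l, <- Rmult_assoc, Rinv_l by lra.
    lra. }
  rewrite !norm1h_eq.
  assert (0 < 1 / INR (S n)) by (apply Rdiv_lt_0_compat; [lra | apply lt_0_INR; lia]).
  nra.
Qed.

Lemma maxUpTo_ge M g k : (k <= M)%nat -> g k <= maxUpTo M g.
Proof.
  induction M as [|M IH]; intros Hk; simpl.
  - replace k with O by lia; lra.
  - destruct (Nat.eq_dec k (S M)) as [-> | Hne]; [apply Rmax_r|].
    eapply Rle_trans; [apply IH; lia | apply Rmax_l].
Qed.

Lemma maxUpTo_le M g B : (forall k, (k <= M)%nat -> g k <= B) -> maxUpTo M g <= B.
Proof.
  induction M as [|M IH]; intros HB; simpl; [apply HB; lia|].
  apply Rmax_lub; [apply IH; intros; apply HB; lia | apply HB; lia].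
Qed.

Lemma maxUpTo_le_of_increments M c (x y : nat -> R) :
  0 <= c -> (forall k, (k <= M)%nat -> 0 <= y k) ->
  (forall k, (k < M)%nat -> x (S k) <= x k + c * y k) ->
  maxUpTo M x <= x O + INR M * c * maxUpTo M y.
Proof.
  intros Hc Hy Hx.
  set (Y := maxUpTo M y).
  assert (HY : 0 <= c * Y).
  { apply Rmult_le_pos; [exact Hc|].
    apply Rle_trans with (y O); [apply Hy; lia | apply maxUpTo_ge; lia]. }
  assert (Hk : forall k, (k <= M)%nat -> x k <= x O + INR k * (c * Y)).
  { induction k as [|k IH]; intros Hk; [simpl; lra|].
    assert (y k <= Y) by (apply maxUpTo_ge; lia).
    pose proof (Hx k Hk); pose proof (IH ltac:(lia)).
    rewrite S_INR; nra. }
  apply maxUpTo_le; intros k Hkm.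
  pose proof (Hk k Hkm).
  assert (INR k <= INR M) by (apply le_INR; exact Hkm).
  nra.
Qed.

Theorem proposition2 (T : R) (M N : nat) (beta gamma delta mu eps : R)
  (sigma : compt -> R) (alpha : compt -> nat -> nat -> R) (m0 : compt -> R -> R)
  (m : compt -> nat -> nat -> R) :
  0 < T -> (2 <= M)%nat -> (2 <= N)%nat ->
  0 <= beta -> 0 <= gamma -> 0 <= delta -> 0 <= mu -> 0 <= eps <= 1 ->
  (forall i, 0 < sigma i) ->
  (forall i k, (k <= M)%nat -> alpha i k O = 0 /\ alpha i k N = 0) ->
  (forall i, (1 / INR N) ^ 2 <= 4 * (T / INR M) * sigma i ^ 2) ->
  (forall i k j, (k <= M)%nat -> (j <= N)%nat ->
     (T / INR M) * Rabs (alpha i k j) <= (1 / INR N) / 4) ->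
  scheme_solution T M N beta gamma delta mu eps sigma alpha m0 m ->
  forall i : compt,
    maxUpTo M (fun k => norm1h N (m i k))
    <= norm1h N (fun j => m0 i (xmid N j))
       + T * maxUpTo M (fun k => norm1h N (fun j => freact beta gamma delta mu eps m i k j)).
Proof.
  intros HT HM HN _ _ _ _ _ _ Hbdry Hdiff Hcfl [Hinit Hscheme] i.
  set (tau := T / INR M) in *; set (h := 1 / INR N) in *.
  assert (HMpos : 0 < INR M) by (apply lt_0_INR; lia).
  assert (Htau : 0 < tau) by (apply Rdiv_lt_0_compat; lra).
  assert (Hh : 0 < h) by (apply Rdiv_lt_0_compat; [lra | apply lt_0_INR; lia]).
  replace T with (INR M * tau) by (unfold tau; field; lra).
  replace (norm1h N (fun j => m0 i (xmid N j))) with (norm1h N (m i O))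
    by (apply sumN_ext; intros; rewrite Hinit; auto).
  apply maxUpTo_le_of_increments; [lra | intros; apply norm1h_ge0 |].
  intros k Hk.
  destruct N as [|n]; [lia|].
  destruct (Hbdry i (S k) Hk) as [HA0 HAn].
  apply (scheme_step_norm1h_le n tau h (sigma i) (alpha i (S k)));
    [exact Htau | exact Hh | apply Hdiff | exact HA0 | exact HAn
    | intros j Hj; apply Hcfl; lia | intros j Hj].
  pose proof (Hscheme i (S k) j ltac:(lia) Hj) as Hstep.
  rewrite Nat.sub_succ, Nat.sub_0_r in Hstep; exact Hstep.
Qed.
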